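(* Let $K$ be a field of characteristic $0$, $e\ge2$, and $A=[a_{i,j}]$, $B=[b_{i,j}]\in M_e(K)$, with indices taken in $\mathbb{Z}/e\mathbb{Z}$; write $A[i,j]=a_{i,j}$. For $d\in(\mathbb{Z}/e\mathbb{Z})^\times$, \[ (B\overset{d}{\ast}A)[i,j]=(A\overset{d^{-1}}{\ast}B)[-d^{-1}i,-d^{-1}j]\quad\text{for all } i,j. \] In particular $A\overset{-1}{\ast}B=B\overset{-1}{\ast}A$.
   Context: For $A=[a_{i,j}],B=[b_{i,j}]\in M_e(K)$ (indices modulo $e$) and $d\in(\mathbb{Z}/e\mathbb{Z})\setminus\{0\}$, the $d$-composition is $A\overset{d}{\ast}B=\big[\sum_{s=0}^{e-1}\sum_{t=0}^{e-1}a_{s,t}b_{ds+i,dt+j}\big]_{0\le i,j\le e-1}$. *)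

From mathcomp Require Import all_boot all_order all_algebra.
Set Implicit Arguments. Unset Strict Implicit. Unset Printing Implicit Defensive.
Import GRing.Theory.
Local Open Scope ring_scope.

(* Matrices in M_e(K) with rows/columns indexed by Z/eZ.  For 1 < e the
   index type 'I_(Zp_trunc e).+2 is exactly 'Z_e (of cardinality e). *)
Notation mxZ K e := 'M[K]_((Zp_trunc e).+2).

Definition dcomp (K : fieldType) (e : nat) (d : 'Z_e) (A B : mxZ K e) : mxZ K e :=
  \matrix_(i, j) \sum_(s : 'Z_e) \sum_(t : 'Z_e) A s t * B (d * s + i) (d * t + j).

From mathcomp Require Import all_boot all_order all_algebra.
Import GRing.Theory.
Local Open Scope ring_scope.

(* Both sides are double sums over Z/eZ; substituting s := d s + i and
   t := d t + j in the right-hand side gives the left. *)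

Lemma big_affine_reindex {R : finUnitRingType} {V : nmodType} (d k : R)
    {F : R -> V} :
  d \is a GRing.unit -> \sum_x F x = \sum_x F (d * x + k).
Proof.
move=> d_unit; apply: (reindex_inj (h := fun x => d * x + k)).
by move=> x y /addIr /(mulrI d_unit).
Qed.

Lemma mulKr_affine (R : unitRingType) (d k x : R) :
  d \is a GRing.unit -> d^-1 * (d * x + k) - d^-1 * k = x.
Proof. by move=> d_unit; rewrite mulrDr mulKr // addrK. Qed.

Lemma dcompC_unit {K : fieldType} {e : nat} (A B : mxZ K e) (d : 'Z_e) :
  d \is a GRing.unit -> forall i j : 'Z_e,
  dcomp d B A i j = dcomp d^-1 A B (- (d^-1 * i)) (- (d^-1 * j)).
Proof.
move=> d_unit i j; rewrite !mxE.
rewrite [RHS](big_affine_reindex d i d_unit); apply: eq_bigr => s _.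
rewrite [RHS](big_affine_reindex d j d_unit); apply: eq_bigr => t _.
by rewrite !mulKr_affine // mulrC.
Qed.

Lemma dcompN1C {K : fieldType} {e : nat} (A B : mxZ K e) :
  dcomp (-1) A B = dcomp (-1) B A.
Proof.
apply/matrixP => i j.
by rewrite (dcompC_unit A B _ (unitrN1 _)) invrN1 !mulN1r !opprK.
Qed.

Theorem proposition3p1 (K : fieldType) (e : nat) (charK0 : [pchar K] =i pred0)
  (he : (1 < e)%N) (A B : mxZ K e) :
  (forall d : 'Z_e, d \is a GRing.unit ->
     forall i j : 'Z_e,
       dcomp d B A i j = dcomp d^-1 A B (- (d^-1 * i)) (- (d^-1 * j)))
  /\ dcomp (-1) A B = dcomp (-1) B A.
Proof. by split; [exact: dcompC_unit | exact: dcompN1C]. Qed.
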